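(* For every integer $n\ge 2$, the Mutt polynomial \[ M(x)=\frac{(2n-1)T_{2n+1}(\sqrt{x})+(2n+1)T_{2n-1}(\sqrt{x})}{x\sqrt{x}} \] is a polynomial in $x$ of degree $n-1$ with leading coefficient $(2n-1)2^{2n}$, and \[ \operatorname{Disc}_x M(x)=\pm\,3\,(2n-1)^{n-3}(2n+1)^{n-2}\,n^{n-3}\,2^{2n^2-n-5}. \]
   Context: $T_m$ is the Chebyshev polynomial of the first kind, $T_m(\cos\theta)=\cos m\theta$. The discriminant of a polynomial of degree $d$ with leading coefficient $\gamma$ and roots $r_1,\dots,r_d$ is $\gamma^{2d-2}\prod_{i<j}(r_i-r_j)^2$ (equal to $1$ when $d=1$). *)

From HB Require Import structures.
From mathcomp Require Import all_boot all_order all_algebra all_field.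
Set Implicit Arguments. Unset Strict Implicit. Unset Printing Implicit Defensive.
Import Order.TTheory GRing.Theory Num.Theory.
Local Open Scope ring_scope.

Fixpoint cheb_pair (R : nzRingType) (m : nat) : {poly R} * {poly R} :=
  match m with
  | 0%N => (1, 'X)
  | m'.+1 => let (a, b) := cheb_pair R m' in (b, 'X *+ 2 * b - a)
  end.
Definition chebT (R : nzRingType) (m : nat) : {poly R} := (cheb_pair R m).1.

(* Discriminant over an algebraically closed field, following the definition
   gamma^(2d-2) * prod_{i<j} (r_i - r_j)^2 where p = gamma * prod (X - r_i). *)
Definition poly_roots (F : closedFieldType) (p : {poly F}) : seq F :=
  sval (closed_field_poly_normal p).

Definition disc (F : closedFieldType) (p : {poly F}) : F :=
  let r := poly_roots p in
  let d := (size p).-1 in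
  lead_coef p ^+ (2 * d - 2) *
  \prod_(i < size r) \prod_(j < size r | (i < j)%N) (r`_i - r`_j) ^+ 2.

From HB Require Import structures.
From mathcomp Require Import all_boot all_order all_algebra all_field.
From mathcomp Require Import ring zify.
Import Order.TTheory GRing.Theory Num.Theory.
Local Open Scope ring_scope.

(* Let m = 2n - 1 and x = X^2. As T_{m+1} is even and U_m is odd, write T_{m+1} = W(x) and
   U_m = X V(x). From m T_{m+2} + (m+2) T_m = 2(m+1) X T_{m+1} - 2(X^2 - 1) U_m, its
   derivative 2m(m+2) X U_m and T_{m+1}^2 - (X^2 - 1) U_m^2 = 1 one gets
     3M + 2xM' = 2m(m+2) V,    xM = 2(m+1) W + 2(1 - x) V,    W^2 - x(x - 1) V^2 = 1.
   So 2rM'(r) = 2m(m+2) V(r) at the roots r of M, and (sM(s))^2 = 4(m+1)^2 at the roots s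
   of V. Up to sign and powers of the leading coefficient, Disc M is the product of M' over
   the roots of M; the first relation turns it into Res(M, V), hence into Res(V, M), which
   the second relation evaluates. The products of the roots come from M(0) and V(0). *)

Section ProductsOverRoots.
Variable R : comNzRingType.

Lemma prodr_const_seq (I : Type) (r : seq I) (c : R) : \prod_(i <- r) c = c ^+ size r.
Proof. by elim: r => [|x r IHr]; rewrite ?big_nil ?big_cons ?IHr ?exprS. Qed.

Lemma deriv_prod_XsubC_nth (r : seq R) (i : 'I_(size r)) :
  (\prod_(z <- r) ('X - z%:P))^`().[r`_i] = \prod_(j < size r | j != i) (r`_i - r`_j).
Proof.
rewrite (big_nth 0) big_mkord (bigD1 i) //= derivM derivXsubC mul1r hornerD hornerM.
rewrite hornerXsubC subrr mul0r addr0 horner_prod.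
by apply: eq_bigr => j _; rewrite hornerXsubC.
Qed.

Lemma prod_lt_sqr_prod_neq (r : seq R) :
  (\prod_(i < size r) \prod_(j < size r | (i < j)%N) (r`_i - r`_j) ^+ 2) ^+ 2 =
  (\prod_(i < size r) \prod_(j < size r | j != i) (r`_i - r`_j)) ^+ 2.
Proof.
symmetry; rewrite -prodrXl; under eq_bigr => i _ do rewrite -prodrXl.
have split_neq (i : 'I_(size r)) :
  \prod_(j < size r | j != i) (r`_i - r`_j) ^+ 2 =
  \prod_(j < size r | (i < j)%N) (r`_i - r`_j) ^+ 2 *
  \prod_(j < size r | (j < i)%N) (r`_i - r`_j) ^+ 2.
  rewrite (bigID (fun j : 'I_(size r) => (i < j)%N)) /=.
  by congr (_ * _); apply: eq_bigl => j; rewrite -(inj_eq val_inj) /=; case: ltngtP.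
rewrite (eq_bigr _ (fun i _ => split_neq i)) big_split /= expr2; congr (_ * _).
rewrite (exchange_big_dep predT) //=; apply: eq_bigr => j _.
by apply: eq_bigr => i _; rewrite -opprB sqrrN.
Qed.

Lemma prod_sub_sqr_swap (r s : seq R) :
  (\prod_(x <- r) \prod_(y <- s) (x - y)) ^+ 2 =
  (\prod_(y <- s) \prod_(x <- r) (y - x)) ^+ 2.
Proof.
rewrite -!prodrXl; under eq_bigr do rewrite -prodrXl.
under [RHS]eq_bigr do rewrite -prodrXl.
rewrite exchange_big; apply: eq_bigr => y _; apply: eq_bigr => x _.
by rewrite -opprB sqrrN.
Qed.

End ProductsOverRoots.

Section RootProducts.
Context {F : closedFieldType}.
Implicit Types (p q : {poly F}) (x : F).

Lemma poly_rootsE p : p = lead_coef p *: \prod_(z <- poly_roots p) ('X - z%:P).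
Proof. by rewrite /poly_roots; case: closed_field_poly_normal. Qed.

Lemma size_poly_roots p : p != 0 -> size (poly_roots p) = (size p).-1.
Proof.
by move=> p0; rewrite {2}(poly_rootsE p) size_scale ?lead_coef_eq0 // size_prod_XsubC.
Qed.

Lemma horner_poly_roots p x :
  p.[x] = lead_coef p * \prod_(z <- poly_roots p) (x - z).
Proof.
rewrite {1}(poly_rootsE p) hornerZ horner_prod.
by congr (_ * _); apply: eq_bigr => z _; rewrite hornerXsubC.
Qed.

Lemma root_poly_roots p x : x \in poly_roots p -> root p x.
Proof.
by move=> xr; rewrite /root horner_poly_roots (big_rem x xr) /= subrr mul0r mulr0.
Qed.

(* [root_prod p q] is the resultant Res(p, q) divided by lead_coef p ^+ (size q).-1. *)
Definition root_prod p q := \prod_(x <- poly_roots p) q.[x].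

Lemma eq_root_prod p q1 q2 :
  (forall x, root p x -> q1.[x] = q2.[x]) -> root_prod p q1 = root_prod p q2.
Proof. by move=> Eq; apply: eq_big_seq => x /root_poly_roots /Eq. Qed.

Lemma root_prodM p q1 q2 :
  root_prod p (q1 * q2) = root_prod p q1 * root_prod p q2.
Proof. by rewrite -big_split; apply: eq_bigr => x _; rewrite hornerM. Qed.

Lemma root_prodX p : (lead_coef p * root_prod p 'X) ^+ 2 = p.[0] ^+ 2.
Proof.
rewrite horner_poly_roots /root_prod !exprMn -!prodrXl.
by congr (_ * _); apply: eq_bigr => x _; rewrite hornerX sub0r sqrrN.
Qed.

Lemma root_prodC p c : p != 0 -> root_prod p c%:P = c ^+ (size p).-1.
Proof.
move=> p0; rewrite -size_poly_roots // -prodr_const_seq.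
by apply: eq_bigr => x _; rewrite hornerC.
Qed.

Lemma root_prodZ p c q : p != 0 ->
  root_prod p (c *: q) = c ^+ (size p).-1 * root_prod p q.
Proof. by move=> p0; rewrite -mul_polyC root_prodM root_prodC. Qed.

Lemma root_prodE p q : p != 0 -> root_prod p q =
  lead_coef q ^+ (size p).-1 * \prod_(x <- poly_roots p) \prod_(y <- poly_roots q) (x - y).
Proof.
move=> p0; rewrite -size_poly_roots // -prodr_const_seq -big_split.
by apply: eq_bigr => x _; rewrite horner_poly_roots.
Qed.

Lemma root_prod_swap p q : p != 0 -> q != 0 ->
  (lead_coef p ^+ (size q).-1 * root_prod p q) ^+ 2 =
  (lead_coef q ^+ (size p).-1 * root_prod q p) ^+ 2.
Proof.
move=> p0 q0; rewrite !root_prodE // !exprMn prod_sub_sqr_swap; ring.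
Qed.

Lemma disc_root_prod_deriv p N : size p = N.+2 ->
  (lead_coef p * disc p) ^+ 2 = (lead_coef p ^+ N * root_prod p p^`()) ^+ 2.
Proof.
move=> sp; have p0 : p != 0 by rewrite -size_poly_eq0 sp.
have sr : size (poly_roots p) = N.+1 by rewrite size_poly_roots // sp.
set r := poly_roots p in sr *.
have -> : root_prod p p^`() =
    \prod_(i < size r) (lead_coef p * \prod_(j < size r | j != i) (r`_i - r`_j)).
  rewrite /root_prod (big_nth 0) big_mkord; apply: eq_bigr => i _.
  by rewrite {1}(poly_rootsE p) derivZ hornerZ deriv_prod_XsubC_nth.
rewrite big_split /= prodr_const card_ord.
rewrite /disc sp /= (_ : (2 * N.+1 - 2 = N + N)%N); last by lia.
rewrite -/r !exprMn prod_lt_sqr_prod_neq sr.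
move: (lead_coef p) (\prod_(i < N.+1) _) => c Q; rewrite exprD (exprS c N); ring.
Qed.

Lemma disc_sqr_of_root_relations {M V : {poly F}} {N : nat} {a b : F} :
    size M = N.+2 -> size V = N.+2 ->
    (forall x, root M x -> 2%:R * x * M^`().[x] = a * V.[x]) ->
    (forall y, root V y -> (y * M.[y]) ^+ 2 = b ^+ 2) ->
  (disc M * (lead_coef M * 2%:R ^+ N.+1 * M.[0] * V.[0])) ^+ 2 =
  (a ^+ N.+1 * lead_coef V ^+ N.+2 * b ^+ N.+1) ^+ 2.
Proof.
move=> sM sV rootM rootV.
have M0 : M != 0 by rewrite -size_poly_eq0 sM.
have V0 : V != 0 by rewrite -size_poly_eq0 sV.
have discM := disc_root_prod_deriv M N sM.
have rootM_deriv : 2%:R ^+ N.+1 * root_prod M 'X * root_prod M M^`() =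
              a ^+ N.+1 * root_prod M V.
  have := @eq_root_prod M (2%:R *: ('X * M^`())) (a *: V).
  rewrite !root_prodZ // root_prodM sM mulrA; apply=> x /rootM.
  by rewrite !hornerZ hornerM hornerX mulrA.
have rootVM : (root_prod V 'X * root_prod V M) ^+ 2 = (b ^+ N.+1) ^+ 2.
  rewrite -root_prodM expr2 -root_prodM (@eq_root_prod V _ (b ^+ 2)%:P).
    by rewrite root_prodC // sV -!exprM mulnC.
  by move=> y /rootV <-; rewrite hornerC !hornerM hornerX -expr2.
have swapMV := root_prod_swap M V M0 V0; rewrite sM sV /= in swapMV.
(* Substitute the relations one at a time; the squares absorb all signs. *)
transitivity ((lead_coef M * disc M) ^+ 2 * (2%:R ^+ N.+1) ^+ 2 *
              M.[0] ^+ 2 * V.[0] ^+ 2); first by ring.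
rewrite discM -!root_prodX.
transitivity (lead_coef V ^+ 2 * root_prod V 'X ^+ 2 * (lead_coef M ^+ N.+1) ^+ 2 *
  (2%:R ^+ N.+1 * root_prod M 'X * root_prod M M^`()) ^+ 2); first by rewrite (exprS (lead_coef M) N); ring.
rewrite rootM_deriv.
transitivity (lead_coef V ^+ 2 * root_prod V 'X ^+ 2 * (a ^+ N.+1) ^+ 2 *
  (lead_coef M ^+ N.+1 * root_prod M V) ^+ 2); first by ring.
rewrite swapMV.
transitivity ((a ^+ N.+1) ^+ 2 * (lead_coef V ^+ N.+2) ^+ 2 *
  (root_prod V 'X * root_prod V M) ^+ 2); first by rewrite (exprS (lead_coef V) N.+1); ring.
by rewrite rootVM; ring.
Qed.

End RootProducts.

(* [chebU R m] is the classical U_{m-1}, so that T_m' = m U_{m-1} reads [T m' = m U m]. *)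
Fixpoint chebU_pair (R : nzRingType) (m : nat) : {poly R} * {poly R} :=
  match m with
  | 0%N => (0, 1)
  | m'.+1 => let (a, b) := chebU_pair R m' in (b, 'X *+ 2 * b - a)
  end.
Definition chebU (R : nzRingType) (m : nat) : {poly R} := (chebU_pair R m).1.

Definition mutt_numer (R : nzRingType) (m : nat) : {poly R} :=
  m%:R *: chebT R m.+2 + m.+2%:R *: chebT R m.

Section Chebyshev.
Variable R : comNzRingType.
Local Notation T m := (chebT R m).
Local Notation U m := (chebU R m).

Lemma chebTSS m : T m.+2 = 'X *+ 2 * T m.+1 - T m.
Proof. by rewrite /chebT /=; case: (cheb_pair _ m). Qed.

Lemma chebUSS m : U m.+2 = 'X *+ 2 * U m.+1 - U m.
Proof. by rewrite /chebU /=; case: (chebU_pair _ m). Qed.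

Lemma chebTS_chebU m :
  T m.+1 = 'X * T m + ('X^2 - 1) * U m /\ U m.+1 = T m + 'X * U m.
Proof.
elim: m => [|m [IT IU]]; first by rewrite /chebT /chebU /=; split; ring.
by rewrite chebTSS chebUSS IT IU; split; ring.
Qed.

Lemma chebTS m : T m.+1 = 'X * T m + ('X^2 - 1) * U m.
Proof. by case: (chebTS_chebU m). Qed.

Lemma chebUS m : U m.+1 = T m + 'X * U m.
Proof. by case: (chebTS_chebU m). Qed.

Lemma chebT_pell m : T m ^+ 2 - ('X^2 - 1) * U m ^+ 2 = 1.
Proof.
elim: m => [|m IHm]; first by rewrite /chebT /chebU /=; ring.
by rewrite chebTS chebUS -[RHS]IHm; ring.
Qed.

Lemma deriv_chebT m : (T m)^`() = U m * m%:R.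
Proof.
suff: (T m)^`() = U m * m%:R /\ (T m.+1)^`() = U m.+1 * m.+1%:R by case.
elim: m => [|m [IH1 IH2]].
  by rewrite /chebT /chebU /= derivC derivX mul0r mul1r.
split=> //; rewrite chebTSS derivB derivM derivMn derivX IH1 IH2.
have -> : T m.+1 = U m.+2 - 'X * U m.+1 by rewrite chebUS; ring.
by rewrite chebUSS -!natr1; ring.
Qed.

Lemma chebTU_even k : exists W V : {poly R},
  T (2 * k) = W \Po 'X^2 /\ U (2 * k) = 'X * (V \Po 'X^2).
Proof.
elim: k => [|k [W [V [TW UV]]]].
  by exists 1, 0; rewrite /chebT /chebU /= comp_poly0 rmorph1 mulr0.
pose A := W + ('X - 1) * V; pose B := W + 'X * V.
exists ('X * A + ('X - 1) * B), (A + B).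
rewrite (_ : 2 * k.+1 = (2 * k).+2)%N; last by lia.
have comp1 : (1 : {poly R}) \Po 'X^2 = 1 by rewrite -polyC1 comp_polyC.
rewrite !(chebTS, chebUS) TW UV /A /B.
rewrite !(comp_polyD, comp_polyB, comp_polyM, comp_polyX, comp1).
by split; ring.
Qed.

Lemma mutt_numerE m :
  mutt_numer R m = (2 * m.+1)%:R *: ('X * T m.+1) - 2%:R *: (('X^2 - 1) * U m.+1).
Proof.
have Tm : T m = 'X * T m.+1 - ('X^2 - 1) * U m.+1 by rewrite chebTS chebUS; ring.
rewrite /mutt_numer (chebTS m.+1) Tm -!mul_polyC !polyC_natr !natrM -!natr1; ring.
Qed.

Lemma deriv_mutt_numer m : (mutt_numer R m)^`() = (2 * m * m.+2)%:R *: ('X * U m.+1).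
Proof.
rewrite /mutt_numer derivD !derivZ !deriv_chebT chebUSS -!mul_polyC !polyC_natr.
by rewrite !natrM -!natr1; ring.
Qed.

End Chebyshev.

Section ChebyshevDegree.
Variable R : idomainType.
Hypothesis two_neq0 : (2%:R : R) != 0.
Local Notation T m := (chebT R m).
Local Notation U m := (chebU R m).

Lemma size_lead_coef_cheb_step {p q : {poly R}} {k : nat} :
  size p = k.+1 -> (size q <= k.+1)%N ->
  size ('X *+ 2 * p - q) = k.+2 /\ lead_coef ('X *+ 2 * p - q) = 2%:R * lead_coef p.
Proof.
move=> sp sq.
have E : 'X *+ 2 * p = 2%:R *: (p * 'X) by rewrite scaler_nat mulrnAl mulrC.
have p0 : p != 0 by rewrite -size_poly_eq0 sp.
have s2p : size ('X *+ 2 * p) = k.+2 by rewrite E size_scale // size_mulX // sp.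
have lt : (size (- q) < size ('X *+ 2 * p)%R)%N by rewrite size_polyN s2p ltnS.
by rewrite size_polyDl // lead_coefDl // s2p E lead_coefZ lead_coefMX.
Qed.

Lemma size_lead_coef_cheb m :
  [/\ size (T m.+1) = m.+2, lead_coef (T m.+1) = 2%:R ^+ m,
      size (U m.+1) = m.+1 & lead_coef (U m.+1) = 2%:R ^+ m].
Proof.
elim/ltn_ind: m => -[|[|m]] IH.
- by rewrite /chebT /chebU /= size_polyX lead_coefX size_poly1 lead_coef1.
- rewrite chebTSS chebUSS.
  have [sT1 lT1 sU1 lU1] := IH 0%N isT.
  have sT0 : (size (T 0) <= 2)%N by rewrite /chebT /= size_poly1.
  have sU0 : (size (U 0) <= 1)%N by rewrite /chebU /= size_poly0.
  have [sT lT] := size_lead_coef_cheb_step sT1 sT0.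
  have [sU lU] := size_lead_coef_cheb_step sU1 sU0.
  by rewrite sT lT lT1 sU lU lU1 !mulr1.
rewrite chebTSS chebUSS.
have [sT1 lT1 sU1 lU1] := IH m.+1 (ltnSn _).
have [sT0 _ sU0 _] := IH m (ltnW (ltnSn _)).
have [sT lT] := size_lead_coef_cheb_step sT1 (leqW (eq_leq sT0)).
have [sU lU] := size_lead_coef_cheb_step sU1 (leqW (eq_leq sU0)).
by rewrite sT lT lT1 sU lU lU1 -!exprS.
Qed.

End ChebyshevDegree.

Section EvenComposition.
Variable R : idomainType.
Implicit Types p q : {poly R}.

Lemma size_X2 : size ('X^2 : {poly R}) = 3.
Proof. by rewrite size_polyXn. Qed.

Lemma size_compX2 p : p != 0 -> size (p \Po 'X^2) = ((size p).-1 * 2).+1.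
Proof.
move=> p0; have := size_comp_poly p 'X^2; rewrite size_X2 /= => <-.
by rewrite prednK // lt0n size_poly_eq0 comp_poly_eq0 ?size_X2.
Qed.

Lemma lead_coef_compX2 p : lead_coef (p \Po 'X^2) = lead_coef p.
Proof. by rewrite lead_coef_comp ?size_X2 // lead_coefXn expr1n mulr1. Qed.

Lemma compX2_mulXn_inj p q j :
  (p \Po 'X^2) * 'X^j = (q \Po 'X^2) * 'X^j -> p = q.
Proof.
move=> /mulIf pq; apply/eqP; rewrite -subr_eq0 -(comp_poly_eq0 _ (q := 'X^2)) ?size_X2 //.
by rewrite comp_polyB pq ?subrr // monic_neq0 // monicXn.
Qed.

End EvenComposition.

Section MuttPolynomial.
Context {R : numDomainType} {k : nat}.
Local Notation T m := (chebT R m).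
Local Notation U m := (chebU R m).
Let m := (2 * k).+1.

Let two_neq0 : (2%:R : R) != 0. Proof. by rewrite pnatr_eq0. Qed.

Lemma size_lead_coef_mutt_numer :
  size (mutt_numer R m) = m.+3 /\ lead_coef (mutt_numer R m) = m%:R * 2%:R ^+ m.+1.
Proof.
have [sT2 lT2 _ _] := size_lead_coef_cheb _ two_neq0 m.+1.
have [sT0 _ _ _] := size_lead_coef_cheb _ two_neq0 (2 * k).
have lt : (size (m.+2%:R *: T m) < size (m%:R *: T m.+2))%N.
  by rewrite !size_scale ?pnatr_eq0 // sT0 sT2.
by rewrite /mutt_numer size_polyDl // lead_coefDl // size_scale ?pnatr_eq0 // lead_coefZ lT2.
Qed.

Lemma mutt_exists : exists M : {poly R}, (M \Po 'X^2) * 'X^3 = mutt_numer R m.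
Proof.
have [W [V [TW UV]]] := chebTU_even R k.+1.
rewrite (_ : 2 * k.+1 = m.+1)%N in TW UV; last by rewrite /m; lia.
pose G := (2 * m.+1)%:R *: W - 2%:R *: (('X - 1) * V).
have fG : mutt_numer R m = 'X * (G \Po 'X^2).
  rewrite mutt_numerE TW UV /G !(comp_polyB, comp_polyZ, comp_polyM, comp_polyX).
  by rewrite -polyC1 comp_polyC -!mul_polyC; ring.
have G0 : root G 0.
  have := congr1 (fun p => p^`().[0]) fG.
  rewrite /= deriv_mutt_numer derivM derivX mul1r deriv_comp.
  rewrite hornerD hornerZ !hornerM hornerX !mul0r mulr0 addr0 horner_comp hornerXn expr0n.
  by rewrite /root => <-.
have [q Dq] := factor_theorem G 0 G0.
exists q; rewrite fG Dq comp_polyM comp_polyB comp_polyX comp_polyC subr0; ring.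
Qed.

Context {M : {poly R}}.
Hypothesis HM : (M \Po 'X^2) * 'X^3 = mutt_numer R m.

Lemma size_mutt : size M = k.+1.
Proof.
have [sf _] := size_lead_coef_mutt_numer.
have M0 : M != 0 by apply/eqP => M0; move: sf; rewrite -HM M0 comp_poly0 mul0r size_poly0.
move: sf; rewrite -HM size_mulXn ?size_compX2 // -?size_poly_eq0 ?size_compX2 //.
by move: M0; rewrite -size_poly_eq0 /m; case: (size M) => // s _; lia.
Qed.

Lemma lead_coef_mutt : lead_coef M = m%:R * 2%:R ^+ m.+1.
Proof.
have [_ <-] := size_lead_coef_mutt_numer.
by rewrite -HM lead_coefM lead_coefXn mulr1 lead_coef_compX2.
Qed.

Context {W V : {poly R}}.
Hypotheses (TW : T m.+1 = W \Po 'X^2) (UV : U m.+1 = 'X * (V \Po 'X^2)).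

Lemma size_mutt_V : size V = k.+1.
Proof.
have [_ _ sU _] := size_lead_coef_cheb _ two_neq0 m.
have V0 : V != 0 by apply/eqP => V0; move: sU; rewrite UV V0 comp_poly0 mulr0 size_poly0.
move: sU; rewrite UV mulrC size_mulX -?size_poly_eq0 ?size_compX2 //.
by move: V0; rewrite -size_poly_eq0 /m; case: (size V) => // s _; lia.
Qed.

Lemma lead_coef_mutt_V : lead_coef V = 2%:R ^+ m.
Proof.
have [_ _ _ <-] := size_lead_coef_cheb _ two_neq0 m.
by rewrite UV mulrC lead_coefMX lead_coef_compX2.
Qed.

Lemma mutt_deriv_identity :
  3%:R *: M + 2%:R *: ('X * M^`()) = (2 * m * m.+2)%:R *: V.
Proof.
apply: (@compX2_mulXn_inj _ _ _ 2).
transitivity (((M \Po 'X^2) * 'X^3)^`()).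
  rewrite derivM deriv_comp !derivXn !(comp_polyD, comp_polyZ, comp_polyM, comp_polyX).
  by rewrite -!mul_polyC; ring.
by rewrite HM deriv_mutt_numer UV comp_polyZ -!mul_polyC; ring.
Qed.

Lemma mutt_identity : 'X * M = (2 * m.+1)%:R *: W + 2%:R *: ((1 - 'X) * V).
Proof.
apply: (@compX2_mulXn_inj _ _ _ 1).
transitivity ((M \Po 'X^2) * 'X^3); first by rewrite comp_polyM comp_polyX; ring.
rewrite HM mutt_numerE TW UV.
rewrite !(comp_polyB, comp_polyD, comp_polyZ, comp_polyM, comp_polyX).
by rewrite -polyC1 comp_polyC -!mul_polyC; ring.
Qed.

Lemma mutt_pell : W ^+ 2 - ('X - 1) * 'X * V ^+ 2 = 1.
Proof.
apply: (@compX2_mulXn_inj _ _ _ 0).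
transitivity (T m.+1 ^+ 2 - ('X^2 - 1) * U m.+1 ^+ 2).
  rewrite TW UV !(comp_polyB, comp_polyM, comp_polyX, rmorphXn).
  by rewrite -polyC1 comp_polyC; ring.
by rewrite chebT_pell -polyC1 comp_polyC mulr1.
Qed.

Lemma mutt_horner0 :
  12%:R * (M.[0] * V.[0]) = (2 * m * m.+2)%:R * (2 * m.+1)%:R ^+ 2.
Proof.
have hMV := congr1 (horner^~ 0) mutt_deriv_identity.
have hMW := congr1 (horner^~ 0) mutt_identity.
have hW := congr1 (horner^~ 0) mutt_pell.
rewrite /= -!polyC1 !(hornerD, hornerN, hornerZ, hornerM, hornerX, hornerC, horner_exp)
  in hMV hMW hW.
rewrite !(mul0r, mulr0, addr0, subr0, sub0r, mul1r, mulr1) in hMV hMW hW.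
transitivity (4%:R * V.[0] * (3%:R * M.[0])); first by ring.
rewrite hMV; transitivity ((2 * m * m.+2)%:R * (2%:R * V.[0]) ^+ 2); first by ring.
have -> : 2%:R * V.[0] = - ((2 * m.+1)%:R * W.[0]) by apply/eqP; rewrite -addr_eq0 addrC -hMW.
by rewrite sqrrN exprMn (expr2 W.[0]) hW mulr1.
Qed.

Lemma mutt_root_deriv x : root M x -> 2%:R * x * M^`().[x] = (2 * m * m.+2)%:R * V.[x].
Proof.
move=> /eqP Mx; have := congr1 (horner^~ x) mutt_deriv_identity.
by rewrite /= !(hornerD, hornerZ, hornerM, hornerX) Mx mulr0 add0r mulrA.
Qed.

Lemma mutt_root_V y : root V y -> (y * M.[y]) ^+ 2 = (2 * m.+1)%:R ^+ 2.
Proof.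
move=> /eqP Vy; have := congr1 (horner^~ y) mutt_identity.
have := congr1 (horner^~ y) mutt_pell.
rewrite /= -!polyC1 !(hornerD, hornerN, hornerZ, hornerM, hornerX, hornerC, horner_exp) Vy.
by rewrite !(mulr0, expr0n, subr0, addr0) /= => HW ->; rewrite exprMn (expr2 W.[y]) HW mulr1.
Qed.

End MuttPolynomial.

(* [Q] is the factor cancelled in [mutt_disc_sqr]. *)
Lemma mutt_disc_constants (R : comNzRingType) j (x y z : R) :
  let Q := 2%:R ^+ (3 * j + 10) * (x * y * z) in
  x * 2%:R ^+ (2 * j.+1).+2 * 2%:R ^+ j.+1 * (2%:R * x * y * (4%:R * z) ^+ 2) = x * z * Q /\
  12%:R * ((2%:R * x * y) ^+ j.+1 * (2%:R ^+ (2 * j.+1).+1) ^+ j.+2 * (4%:R * z) ^+ j.+1) =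
  Q * (3%:R * (x * y * z) ^+ j * 2%:R ^+ (2 * (j * j) + 7 * j + 1)).
Proof.
have pow2 e a b c : e = (a * (j * j) + b * j + c)%N ->
    (2%:R : R) ^+ e = (2%:R ^+ (j * j)) ^+ a * (2%:R ^+ j) ^+ b * 2%:R ^+ c.
  by move=> ->; rewrite !exprD -!exprM (mulnC a) (mulnC b).
have four : (4%:R : R) = 2%:R ^+ 2 by rewrite -natrX.
move=> Q; rewrite {}/Q (exprMn _ (2%:R * x) y) (exprMn _ 2%:R x) !(exprMn _ 4%:R z).
rewrite (exprMn _ (x * y) z) (exprMn _ x y) four -!exprM.
rewrite (pow2 ((2 * j.+1).+2) 0 2 4 ltac:(lia)) (pow2 j.+1 0 1 1 ltac:(lia)).
rewrite (pow2 (2 * 2) 0 0 4 ltac:(lia)) (pow2 (3 * j + 10) 0 3 10 ltac:(lia)).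
rewrite (pow2 ((2 * j.+1).+1 * j.+2) 2 7 6 ltac:(lia)) (pow2 (2 * j.+1) 0 2 2 ltac:(lia)).
rewrite (pow2 (2 * (j * j) + 7 * j + 1) 2 7 1 ltac:(lia)) (exprSr x) (exprSr y) !(exprSr z).
by split; ring.
Qed.

Lemma mutt_disc_sqr {C : numClosedFieldType} {j : nat} {M : {poly C}} : let m := (2 * j.+1).+1 in
  (M \Po 'X^2) * 'X^3 = mutt_numer C m ->
  (disc M * (m%:R * j.+2%:R)) ^+ 2 =
  (3%:R * (m * m.+2 * j.+2)%:R ^+ j * 2%:R ^+ (2 * (j * j) + 7 * j + 1)) ^+ 2.
Proof.
move=> m HM.
have [W [V [TW UV]]] := chebTU_even C j.+2.
rewrite (_ : 2 * j.+2 = m.+1)%N in TW UV; last by rewrite /m; lia.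
have := disc_sqr_of_root_relations (size_mutt HM) (size_mutt_V UV)
  (mutt_root_deriv HM UV) (mutt_root_V HM TW UV).
rewrite (lead_coef_mutt HM) (lead_coef_mutt_V UV).
set x : C := m%:R; set y : C := m.+2%:R; set z : C := j.+2%:R.
have ea : (2 * m * m.+2)%:R = 2%:R * x * y :> C by rewrite !natrM.
have eb : (2 * m.+1)%:R = 4%:R * z :> C by rewrite -natrM /m; congr _%:R; lia.
have h0 := mutt_horner0 HM TW UV; rewrite ea eb in h0.
rewrite ea eb !natrM -/x -/y -/z => E.
have [K1 K2] := mutt_disc_constants _ j x y z.
set Q := _ * (x * y * z) in K1 K2.
have Q0 : Q ^+ 2 != 0 by rewrite !(expf_neq0, mulf_neq0) // pnatr_eq0.
apply: (mulIf Q0); rewrite -!exprMn -(mulrA _ (x * z)) -K1 (mulrC _ Q) -K2 -h0.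
transitivity (12%:R ^+ 2 * (disc M * (x * 2%:R ^+ m.+1 * 2%:R ^+ j.+1 * M.[0] * V.[0])) ^+ 2).
  by ring.
by rewrite E; ring.
Qed.

Theorem theorem3 (n : nat) (hn : (2 <= n)%N) :
  (exists M : {poly algC},
      (M \Po 'X^2) * 'X^3 =
      (2 * n - 1)%:R *: chebT algC (2 * n + 1) + (2 * n + 1)%:R *: chebT algC (2 * n - 1))
  /\
  (forall M : {poly algC},
      (M \Po 'X^2) * 'X^3 =
      (2 * n - 1)%:R *: chebT algC (2 * n + 1) + (2 * n + 1)%:R *: chebT algC (2 * n - 1) ->
      [/\ (size M).-1 = (n - 1)%N,
          lead_coef M = ((2 * n - 1) * 2 ^ (2 * n))%:R
        & let c : algC := 3%:R * ((2 * n - 1)%:R : algC) ^ (n%:Z - 3) * ((2 * n + 1)%:R : algC) ^ (n%:Z - 2)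
                            * (n%:R : algC) ^ (n%:Z - 3) * (2%:R : algC) ^ (2 * n%:Z ^+ 2 - n%:Z - 5) in
          disc M = c \/ disc M = - c]).
Proof.
have [j ->] : exists j, n = j.+2 by exists (n - 2)%N; lia.
set m := (2 * j.+1).+1.
have -> : (2 * j.+2 - 1 = m)%N by rewrite /m; lia.
have -> : (2 * j.+2 + 1 = m.+2)%N by rewrite /m; lia.
have -> : (2 * j.+2 = m.+1)%N by rewrite /m; lia.
split; first exact: mutt_exists.
move=> M HM; split.
- by rewrite (size_mutt HM) subn1.
- by rewrite (lead_coef_mutt HM) natrM natrX.
have x0 : (m%:R : algC) != 0 by rewrite pnatr_eq0.
have z0 : (j.+2%:R : algC) != 0 by rewrite pnatr_eq0.
rewrite (_ : j.+2%:Z - 3 = j%:Z + (-1))%R; last by lia.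
rewrite (_ : j.+2%:Z - 2 = j%:Z)%R; last by lia.
rewrite (_ : 2 * j.+2%:Z ^+ 2 - j.+2%:Z - 5 = (2 * (j * j) + 7 * j + 1)%N%:Z)%R;
  last by rewrite expr2; lia.
rewrite !expfzDr // !exprN1 -!exprnP.
move=> c; have := mutt_disc_sqr HM.
have -> : 3%:R * (m * m.+2 * j.+2)%:R ^+ j * 2%:R ^+ (2 * (j * j) + 7 * j + 1) =
          c * (m%:R * j.+2%:R).
  by rewrite /c !natrM !exprMn; field; rewrite -natrD pnatr_eq0 x0.
have k0 : (m%:R * j.+2%:R : algC) != 0 by rewrite mulf_neq0.
move=> /eqP; rewrite eqf_sqr -mulNr => /orP[] /eqP /(mulIf k0) ->; by [left | right].
Qed.
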